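(* Let $A$ be a row-finite $\omega\times\omega$ complex matrix with finite deficiency, and let $H=(h_{ij})=QA$ be a quasi-Hermite form of $A$ ($Q$ nonsingular row-finite). Let $j_0<j_1<\cdots$ be the indices of the nonzero rows of $H$ and $\mu_n=\ell(H_{j_n})$, and let $S=\omega\setminus\{\mu_0,\mu_1,\dots\}$ (the inaccessible row-lengths). For $s\in S$ define $\xi^{(s)}\in\mathbb{C}^\omega$ by $\xi^{(s)}_s=1$, $\xi^{(s)}_{\mu_n}=-h_{j_n s}$ for all $n$, and $\xi^{(s)}_t=0$ for $t\in S\setminus\{s\}$. Then $\{\xi^{(s)}\}_{s\in S}$ is a finite basis of the solution space $RNS(A)=\{y\in\mathbb{C}^\omega: Ay=0\}$; every $x\in RNS(A)$ equals $\sum_{s\in S}x_s\xi^{(s)}$, and $\dim RNS(A)=\operatorname{def}(A)$.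
   Context: $\omega=\{0,1,2,\dots\}$; $\mathbb{C}^\omega$ is the space of all complex sequences; $(Ay)_n=\sum_k a_{nk}y_k$. Row-finite: finitely many nonzero entries per row; nonsingular: invertible in the algebra of row-finite matrices. Length $\ell(x)$ of a finitely supported $x\neq0$: largest index of a nonzero coordinate. Quasi-Hermite form: with $J$ the indices of nonzero rows and $\ell_j=\ell(H_j)$, (i) $j<j'$ in $J$ implies $\ell_j<\ell_{j'}$; (ii) $h_{j\ell_j}=1$; (iii) $h_{m\ell_j}=0$ for all $m\neq j$. $\operatorname{def}(A)$ is the codimension of the row space of $A$ in the space of finitely supported sequences; it equals $\operatorname{card}(S)$. *)

From HB Require Import structures.
From mathcomp Require Import all_boot all_order all_algebra.
From Stdlib Require Import ClassicalEpsilon.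
Set Implicit Arguments. Unset Strict Implicit. Unset Printing Implicit Defensive.
Import GRing.Theory.
Local Open Scope ring_scope.

Section Defs.
Variable K : fieldType.

Definition fsupp (x : nat -> K) : Prop := exists N, forall k, (N <= k)%N -> x k = 0.

Definition row_finite (A : nat -> nat -> K) : Prop := forall i, fsupp (A i).

Definition idmat : nat -> nat -> K := fun i j => if i == j then 1 else 0.

Definition matmul_eq (P A C : nat -> nat -> K) : Prop :=
  forall i j, exists N, (forall k, (N <= k)%N -> P i k = 0) /\
    C i j = \sum_(k < N) P i k * A k j.

Definition nonsingular (Q : nat -> nat -> K) : Prop :=
  row_finite Q /\ exists P, row_finite P /\ matmul_eq P Q idmat /\ matmul_eq Q P idmat.

Definition rns (A : nat -> nat -> K) (y : nat -> K) : Prop :=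
  forall n, exists N, (forall k, (N <= k)%N -> A n k = 0) /\ \sum_(k < N) A n k * y k = 0.

Definition is_length (x : nat -> K) (l : nat) : Prop :=
  x l != 0 /\ forall k, (l < k)%N -> x k = 0.

Definition quasi_hermite (H : nat -> nat -> K) : Prop :=
  row_finite H /\
  (forall j j' l l', is_length (H j) l -> is_length (H j') l' -> (j < j')%N -> (l < l')%N) /\
  (forall j l, is_length (H j) l -> H j l = 1 /\ forall m, m != j -> H m l = 0).

Definition rowspace (A : nat -> nat -> K) (x : nat -> K) : Prop :=
  exists c : nat -> K, fsupp c /\
    forall k, exists N, (forall i, (N <= i)%N -> c i = 0) /\ x k = \sum_(i < N) c i * A i k.

(* codimension of the row space of A in the space of finitely supported sequences is d *)
Definition codim (A : nat -> nat -> K) (d : nat) : Prop :=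
  exists v : 'I_d -> nat -> K, (forall i, fsupp (v i)) /\
    (forall x, fsupp x -> exists a : 'I_d -> K,
        rowspace A (fun k => x k - \sum_(i < d) a i * v i k)) /\
    (forall a : 'I_d -> K, rowspace A (fun k => \sum_(i < d) a i * v i k) -> forall i, a i = 0).

Definition finite_deficiency (A : nat -> nat -> K) : Prop := exists d, codim A d.

Definition inaccessible (H : nat -> nat -> K) (t : nat) : Prop :=
  ~ exists j, is_length (H j) t.

Definition xi (H : nat -> nat -> K) (s t : nat) : K :=
  match excluded_middle_informative (exists j, is_length (H j) t) with
  | left P => - H (proj1_sig (constructive_indefinite_description _ P)) s
  | right _ => if t == s then 1 else 0
  end.

End Defs.

(* The rows of a quasi-Hermite form H are pivoted at their lengths: the row of length l has a 1
   in column l, is the only nonzero row there, and vanishes beyond l.  So row j of H y = 0 reads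
   y_l = - sum_(s in S) h_(j s) y_s, which is y = sum_s y_s xi^(s), and xi^(s) solves it.
   Dually, the unit vectors e_s (s in S) are independent modulo the row space of H and span the
   finitely supported sequences modulo it.  As Q is invertible, H and A have the same row space
   and the same solutions, so card S = def(A); in particular S is finite. *)
From HB Require Import structures.
From mathcomp Require Import all_boot all_order all_algebra.
From Stdlib Require Import Classical ClassicalEpsilon.
Set Implicit Arguments. Unset Strict Implicit. Unset Printing Implicit Defensive.
Import GRing.Theory.
Local Open Scope ring_scope.

Section TruncatedSums.
Variable K : fieldType.

Definition vanish_from (f : nat -> K) N := forall k, (N <= k)%N -> f k = 0.

Lemma vanish_fromW (f : nat -> K) N M : vanish_from f N -> (N <= M)%N -> vanish_from f M.
Proof. by move=> fN NM k Mk; apply: fN; apply: leq_trans Mk. Qed.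

Lemma eq_sum_vanish (F : nat -> K) N M :
  vanish_from F N -> vanish_from F M -> \sum_(k < N) F k = \sum_(k < M) F k.
Proof.
wlog NM : N M / (N <= M)%N.
  move=> W FN FM; case: (leqP N M) => [NM|/ltnW MN]; first exact: W.
  by symmetry; apply: W.
move=> FN _; rewrite -!(big_mkord xpredT) (big_cat_nat (leq0n N) NM) /=.
rewrite [X in _ + X]big_nat [X in _ + X]big1 ?addr0 //.
by move=> k /andP[/FN].
Qed.

Lemma vanish_from_ubound (g : nat -> nat -> K) n :
  (forall m, (m < n)%N -> exists N, vanish_from (g m) N) ->
  exists N, forall m, (m < n)%N -> vanish_from (g m) N.
Proof.
elim: n => [|n IH] gN; first by exists 0%N.
have [M gM] := IH (fun m lt_mn => gN m (ltnW lt_mn)).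
have [N gnN] := gN n (ltnSn n).
exists (maxn M N) => m; rewrite ltnS leq_eqVlt => /orP[/eqP->|lt_mn].
  by apply: vanish_fromW gnN _; rewrite leq_maxr.
by apply: vanish_fromW (gM m lt_mn) _; rewrite leq_maxl.
Qed.

Definition unitv (s k : nat) : K := if k == s then 1 else 0.

Lemma unitvC s t : unitv s t = unitv t s.
Proof. by rewrite /unitv eq_sym. Qed.

Lemma unitv_vanish s : vanish_from (unitv s) s.+1.
Proof. by move=> k; rewrite /unitv; case: eqP => // ->; rewrite ltnn. Qed.

Lemma sum_ord_unitv (F : nat -> K) N s :
  \sum_(k < N) F k * unitv s k = if (s < N)%N then F s else 0.
Proof.
rewrite (eq_bigr (fun k : 'I_N => if (k : nat) == s then F k else 0)); last first.
  by move=> k _; rewrite /unitv; case: eqP; rewrite ?mulr1 ?mulr0.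
rewrite -big_mkcond /=; case: ifP => [lt_sN|ge_sN].
  by rewrite (big_pred1 (Ordinal lt_sN)) // => k; rewrite -val_eqE.
by rewrite big_pred0 // => k; apply/eqP => ks; rewrite -ks ltn_ord in ge_sN.
Qed.

Lemma sum_seq_unitv (F : nat -> K) (r : seq nat) t :
  uniq r -> \sum_(s <- r) F s * unitv s t = if t \in r then F t else 0.
Proof.
elim: r => [|s r IH]; first by rewrite big_nil.
rewrite /= big_cons in_cons => /andP[s_r uniq_r]; rewrite IH // /unitv eq_sym.
case: eqP => [<-|_]; last by rewrite mulr0 add0r.
by rewrite mulr1 (negbTE s_r) addr0.
Qed.

Lemma sum_uniq_ord (F : nat -> K) (r : seq nat) N :
  uniq r -> (forall s, s \in r -> (s < N)%N) ->
  \sum_(s <- r) F s = \sum_(k < N | (k : nat) \in r) F k.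
Proof.
move=> uniq_r r_N; rewrite -big_mkord -big_filter; apply: perm_big.
apply: uniq_perm => //; first by rewrite filter_uniq ?iota_uniq.
move=> s; rewrite mem_filter mem_iota add0n subn0; apply/idP/andP => [s_r|[] //].
by split; [exact: s_r | exact: r_N].
Qed.

End TruncatedSums.

Section RowSpan.
Variable K : fieldType.
Implicit Types (M X Y Z : nat -> nat -> K) (x y : nat -> K).

(* [rowspace] with a single bound on the coefficients, valid for every column. *)
Definition rowspan M x :=
  exists c N, vanish_from c N /\ forall k, x k = \sum_(i < N) c i * M i k.

Lemma rowspaceE M x : rowspace M x <-> rowspan M x.
Proof.
split=> [[c [[N cN] c_x]]|[c [N [cN c_x]]]]; last by exists c; split; [exists N|exists N].
exists c, N; split=> // k; have [Nk [cNk ->]] := c_x k.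
by apply: (eq_sum_vanish (F := fun i => c i * M i k)) => i;
  [move/cNk->|move/cN->]; rewrite mul0r.
Qed.

Lemma eq_rowspan M x y : rowspan M y -> x =1 y -> rowspan M x.
Proof. by move=> [c [N [cN c_y]]] xy; exists c, N; split=> // k; rewrite xy c_y. Qed.

Lemma rowspan0 M : rowspan M (fun=> 0).
Proof. by exists (fun=> 0), 0%N; split=> // k; rewrite big_ord0. Qed.

Lemma rowspan_row M j : rowspan M (M j).
Proof.
exists (unitv K j), j.+1; split; first exact: unitv_vanish.
by move=> k; under eq_bigr do rewrite mulrC; rewrite (sum_ord_unitv (fun i => M i k)) ltnSn.
Qed.

Lemma rowspan_scaleD M x y a :
  rowspan M x -> rowspan M y -> rowspan M (fun k => a * x k + y k).
Proof.
move=> [c [N [cN c_x]]] [d [N' [dN' d_y]]].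
have cNN' : vanish_from c (maxn N N') by apply: vanish_fromW cN (leq_maxl _ _).
have dNN' : vanish_from d (maxn N N') by apply: vanish_fromW dN' (leq_maxr _ _).
exists (fun i => a * c i + d i), (maxn N N'); split.
  by move=> i Ni; rewrite cNN' ?dNN' ?mulr0 ?addr0.
move=> k; rewrite c_x d_y (eq_sum_vanish (F := fun i => c i * M i k) (M := maxn N N'));
  [|by move=> i /cN->; rewrite mul0r|by move=> i /cNN'->; rewrite mul0r].
rewrite (eq_sum_vanish (F := fun i => d i * M i k) (M := maxn N N'));
  [|by move=> i /dN'->; rewrite mul0r|by move=> i /dNN'->; rewrite mul0r].
by rewrite mulr_sumr -big_split; apply: eq_bigr => i _; rewrite mulrDl mulrA.
Qed.

Lemma rowspan_sum M (I : Type) (r : seq I) (P : pred I) (c : I -> K) (f : I -> nat -> K) :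
  (forall i, rowspan M (f i)) -> rowspan M (fun k => \sum_(i <- r | P i) c i * f i k).
Proof.
move=> Mf; elim: r => [|i r IH].
  by apply: eq_rowspan (rowspan0 M) _ => k; rewrite big_nil.
case: (boolP (P i)) => Pi.
  by apply: eq_rowspan (rowspan_scaleD (c i) (Mf i) IH) _ => k; rewrite big_cons Pi.
by apply: eq_rowspan IH _ => k; rewrite big_cons (negbTE Pi).
Qed.

Lemma matmul_eq_row X Y Z : matmul_eq X Y Z -> forall i, exists N,
  vanish_from (X i) N /\ forall k, Z i k = \sum_(m < N) X i m * Y m k.
Proof.
move=> XYZ i; have [N [XiN _]] := XYZ i 0%N; exists N; split=> // k.
have [N' [XiN' ->]] := XYZ i k.
by apply: (eq_sum_vanish (F := fun m => X i m * Y m k)) => m;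
  [move/XiN'->|move/XiN->]; rewrite mul0r.
Qed.

Lemma rowspan_matmul_row X Y Z : matmul_eq X Y Z -> forall i, rowspan Y (Z i).
Proof. by move=> XYZ i; have [N [XiN Zi]] := matmul_eq_row XYZ i; exists (X i), N. Qed.

Lemma rowspan_matmul X Y Z x : matmul_eq X Y Z -> rowspan Z x -> rowspan Y x.
Proof.
move=> XYZ [c [N [_ c_x]]].
have := rowspan_sum (index_enum 'I_N) xpredT (fun i => c i) (fun i => rowspan_matmul_row XYZ i).
by move/eq_rowspan; apply.
Qed.

(* If P Q = 1 and Q A = H then P H = A: the needed associativity (P Q) A = P (Q A) holds
   because only finitely many rows of A meet the finite support of row i of P. *)
Lemma matmul_eq_cancel P Q A H :
  matmul_eq P Q (idmat K) -> matmul_eq Q A H -> matmul_eq P H A.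
Proof.
move=> PQ1 QAH i k; have [Np [PiNp PQi]] := matmul_eq_row PQ1 i.
exists Np; split=> //.
have [M0 QM0] : exists N, forall m, (m < Np)%N -> vanish_from (Q m) N.
  by apply: vanish_from_ubound => m _; have [N [QmN _]] := matmul_eq_row QAH m; exists N.
pose B := maxn M0 i.+1.
have Hmk m : (m < Np)%N -> H m k = \sum_(l < B) Q m l * A l k.
  move=> lt_mNp; have [N [QmN ->]] := matmul_eq_row QAH m.
  apply: (eq_sum_vanish (F := fun l => Q m l * A l k)) => l; first by move/QmN->; rewrite mul0r.
  by move=> Bl; rewrite QM0 ?mul0r // (leq_trans _ Bl) // leq_maxl.
transitivity (\sum_(l < B) idmat K i l * A l k).
  rewrite (eq_bigr (fun l : 'I_B => A l k * unitv K i l)).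
    by rewrite (sum_ord_unitv (fun l => A l k)) leq_max ltnSn orbT.
  by move=> l _; rewrite mulrC /idmat /unitv eq_sym.
rewrite (eq_bigr (fun m : 'I_Np => \sum_(l < B) P i m * Q m l * A l k)); last first.
  by move=> m _; rewrite Hmk // mulr_sumr; apply: eq_bigr => l _; rewrite mulrA.
by rewrite exchange_big /=; apply: eq_bigr => l _; rewrite PQi mulr_suml.
Qed.

Lemma rns_matmul X Y Z x : matmul_eq X Y Z -> row_finite Z -> rns Y x -> rns Z x.
Proof.
move=> XYZ Zfin Yx i; have [Nx [_ Zi]] := matmul_eq_row XYZ i.
have [Nz ZiNz] := Zfin i.
have [M0 YM0] : exists N, forall m, (m < Nx)%N -> vanish_from (Y m) N.
  by apply: vanish_from_ubound => m _; have [N [YmN _]] := Yx m; exists N.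
exists (maxn Nz M0); split.
  by move=> k Nk; apply: ZiNz; rewrite (leq_trans _ Nk) // leq_maxl.
rewrite (eq_bigr (fun k : 'I_(maxn Nz M0) => \sum_(m < Nx) X i m * (Y m k * x k)));
  last by move=> k _; rewrite Zi mulr_suml; apply: eq_bigr => m _; rewrite mulrA.
rewrite exchange_big /= big1 // => m _; rewrite -mulr_sumr.
have [N [YmN Ymx]] := Yx m.
rewrite -(eq_sum_vanish (F := fun k => Y m k * x k) (N := N)) ?Ymx ?mulr0 // => k Nk.
  by rewrite YmN ?mul0r.
by rewrite YM0 ?mul0r // (leq_trans _ Nk) // leq_maxr.
Qed.

End RowSpan.

Section QuasiHermite.
Variable K : fieldType.
Implicit Type x : nat -> K.

Lemma is_length_exists x k : fsupp x -> x k != 0 -> exists l, is_length x l.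
Proof.
move=> [N xN]; elim: N xN k => [|N IH] xN k xk; first by rewrite xN ?eqxx in xk.
have [xN0|xN0] := eqVneq (x N) 0; last by exists N; split=> // i /xN.
by apply: (IH _ k xk) => i; rewrite leq_eqVlt => /orP[/eqP<-|/xN].
Qed.

Lemma is_length_uniq x l l' : is_length x l -> is_length x l' -> l = l'.
Proof.
move=> [xl x_gt_l] [xl' x_gt_l']; case: (ltngtP l l') => // [lt_ll'|lt_l'l].
  by rewrite x_gt_l ?eqxx in xl'.
by rewrite x_gt_l' ?eqxx in xl.
Qed.

Variable H : nat -> nat -> K.
Hypothesis qhH : quasi_hermite H.

Lemma quasi_hermite_zero_row m : (forall l, ~ is_length (H m) l) -> H m =1 fun=> 0.
Proof.
move=> no_len k; apply/eqP; apply: contraT => Hmk.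
by have [l Hml] := is_length_exists (qhH.1 m) Hmk; case: (no_len l).
Qed.

Lemma quasi_hermite_pivot j l : is_length (H j) l -> H j l = 1.
Proof. by move=> Hjl; have [] := qhH.2.2 j l Hjl. Qed.

Lemma quasi_hermite_off_pivot j j' l l' :
  is_length (H j) l -> is_length (H j') l' -> l != l' -> H j' l = 0.
Proof.
move=> Hjl Hj'l' ll'; apply: (qhH.2.2 j l Hjl).2; apply: contra ll' => /eqP jj'.
by rewrite -jj' in Hjl; rewrite (is_length_uniq Hjl Hj'l').
Qed.

Lemma xi_accessible j s t : is_length (H j) t -> xi H s t = - H j s.
Proof.
move=> Hjt; rewrite /xi; case: excluded_middle_informative => [t_acc|]; last first.
  by case; exists j.
case: constructive_indefinite_description => j' /= Hj't; congr (- H _ s).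
apply/eqP; apply: contraT => j'j; have := (qhH.2.2 j t Hjt).2 j' j'j.
by move/eqP; rewrite (negbTE Hj't.1).
Qed.

Lemma xi_inaccessible s t : inaccessible H t -> xi H s t = unitv K s t.
Proof. by move=> t_inacc; rewrite /xi; case: excluded_middle_informative. Qed.

(* Column l, the pivot of row j, reads off the coefficient of row j, which is 0 because the
   combination vanishes at accessible columns; hence the combination is 0. *)
Lemma unitv_rowspan_free n (f : 'I_n -> nat) (a : 'I_n -> K) :
  injective f -> (forall i, inaccessible H (f i)) ->
  rowspan H (fun k => \sum_(i < n) a i * unitv K (f i) k) -> forall i, a i = 0.
Proof.
move=> f_inj f_inacc [c [N [cN c_y]]].
have c_pivot j l : is_length (H j) l -> c j = 0.
  move=> Hjl; case: (ltnP j N) => [lt_jN|/cN//]; move: (c_y l).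
  rewrite big1 => [|i _]; last first.
    rewrite /unitv; case: eqP => [fil|]; last by rewrite mulr0.
    by case: (f_inacc i); exists j; rewrite -fil.
  rewrite (bigD1 (Ordinal lt_jN)) //= quasi_hermite_pivot // mulr1 big1 ?addr0 // => m.
  by rewrite -val_eqE /= => mj; rewrite ((qhH.2.2 j l Hjl).2 m mj) mulr0.
move=> i0; move: (c_y (f i0)); rewrite (bigD1 i0) //= big1 => [|i]; last first.
  by move=> ne_ii0; rewrite /unitv (inj_eq f_inj) eq_sym (negbTE ne_ii0) mulr0.
rewrite /unitv eqxx mulr1 addr0 => ->; apply: big1 => m _.
case: (classic (exists l, is_length (H m) l)) => [[l /c_pivot->]|no_len].
  by rewrite mul0r.
by rewrite quasi_hermite_zero_row ?mulr0 // => l Hml; apply: no_len; exists l.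
Qed.

(* Clear the top coordinate N of x, either with the unit vector at N (N inaccessible)
   or with the row of length N, whose pivot is 1. *)
Lemma unitv_rowspan_cover n (f : 'I_n -> nat) :
  (forall t, inaccessible H t -> exists i, f i = t) ->
  forall N x, vanish_from x N ->
  exists a : 'I_n -> K, rowspan H (fun k => x k - \sum_(i < n) a i * unitv K (f i) k).
Proof.
move=> f_onto; elim=> [|N IH] x xN.
  exists (fun=> 0); apply: eq_rowspan (rowspan0 H) _ => k.
  by rewrite xN // big1 ?subr0 // => i _; rewrite mul0r.
case: (classic (inaccessible H N)) => [N_inacc|N_acc].
  have [i0 fi0] := f_onto N N_inacc.
  have [a' a'_x] : exists a', rowspan H (fun k => x k - x N * unitv K N k -
      \sum_(i < n) a' i * unitv K (f i) k).
    apply: IH => k; rewrite leq_eqVlt /unitv => /orP[/eqP<-|lt_Nk].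
      by rewrite eqxx mulr1 subrr.
    by rewrite gtn_eqF // mulr0 subr0 xN.
  exists (fun i => a' i + (if i == i0 then x N else 0)); apply: eq_rowspan a'_x _ => k.
  rewrite (eq_bigr (fun i => a' i * unitv K (f i) k +
    (if i == i0 then x N * unitv K (f i) k else 0))); last first.
    by move=> i _; rewrite mulrDl; case: eqP; rewrite ?mul0r.
  by rewrite big_split /= -big_mkcond big_pred1_eq fi0 opprD addrAC addrA.
have [j HjN] : exists j, is_length (H j) N by apply: NNPP.
have [a' a'_x] : exists a', rowspan H (fun k => x k - x N * H j k -
    \sum_(i < n) a' i * unitv K (f i) k).
  apply: IH => k; rewrite leq_eqVlt => /orP[/eqP<-|lt_Nk].
    by rewrite quasi_hermite_pivot // mulr1 subrr.
  by rewrite HjN.2 // mulr0 subr0 xN.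
exists a'; apply: eq_rowspan (rowspan_scaleD (x N) (rowspan_row H j) a'_x) _ => k.
by rewrite [RHS]addrC (addrAC (x k)) subrK.
Qed.

End QuasiHermite.

Lemma bounded_of_uniq_size_le (P : nat -> Prop) d :
  (forall r, uniq r -> (forall t, t \in r -> P t) -> (size r <= d)%N) ->
  exists B, forall s, P s -> (s < B)%N.
Proof.
elim: d P => [|d IH] P P_size.
  exists 0%N => s Ps; suff : (size [:: s] <= 0)%N by [].
  by apply: P_size => // t; rewrite inE => /eqP->.
case: (classic (exists s0, P s0)) => [[s0 Ps0]|no_P]; last first.
  by exists 0%N => s Ps; case: no_P; exists s.
have [B P'B] : exists B, forall s, P s /\ s <> s0 -> (s < B)%N.
  apply: IH => r uniq_r r_P'; rewrite -ltnS.
  have /= := P_size (s0 :: r); rewrite uniq_r andbT; apply.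
    by apply/negP => /r_P' [].
  by move=> t; rewrite inE => /orP[/eqP->|/r_P'[]].
exists (maxn B s0.+1) => s Ps; case: (eqVneq s s0) => [->|ss0].
  by rewrite leq_max ltnSn orbT.
by rewrite leq_max P'B //; split=> //; apply/eqP.
Qed.

Lemma enum_of_bounded (P : nat -> Prop) B :
  (forall s, P s -> (s < B)%N) -> exists r, uniq r /\ forall t, t \in r <-> P t.
Proof.
move=> P_B; pose p t := if excluded_middle_informative (P t) then true else false.
have pP t : p t <-> P t by rewrite /p; case: excluded_middle_informative.
exists [seq t <- iota 0 B | p t]; split; first by rewrite filter_uniq ?iota_uniq.
move=> t; rewrite mem_filter mem_iota add0n; split=> [/andP[/pP]//|Pt].
by apply/andP; split; [exact/pP|rewrite P_B].
Qed.

Lemma nontrivial_relation (K : fieldType) m n (a : 'I_m -> 'I_n -> K) : (n < m)%N ->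
  exists2 u : 'I_m -> K, (forall j, \sum_(i < m) u i * a i j = 0) & exists i, u i != 0.
Proof.
move=> lt_nm; have : kermx (\matrix_(i, j) a i j) != 0.
  rewrite -mxrank_eq0 mxrank_ker subn_eq0 -ltnNge.
  exact: leq_ltn_trans (rank_leq_col _) lt_nm.
case/rowV0Pn => u /sub_kermxP uM u_nz; exists (u 0).
  move=> j; transitivity ((u *m \matrix_(i, j) a i j) 0 j); last by rewrite uM mxE.
  by rewrite mxE; apply: eq_bigr => i _; rewrite mxE.
apply/existsP; apply: contraNT u_nz => /existsPn u0.
by apply/eqP/rowP => i; rewrite mxE; apply/eqP/negPn/u0.
Qed.

Lemma nth_ord_inj (T : eqType) (x0 : T) (r : seq T) :
  uniq r -> injective (fun i : 'I_(size r) => nth x0 r i).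
Proof. by move=> uniq_r i j /eqP; rewrite nth_uniq // => /eqP/val_inj. Qed.

(* Otherwise more than d unit vectors e_t (t in r) would be dependent modulo the row space
   of A, which is that of H. *)
Lemma uniq_inaccessible_size_le (K : fieldType) (A P H : nat -> nat -> K) d r :
  codim A d -> matmul_eq P H A -> quasi_hermite H ->
  uniq r -> (forall t, t \in r -> inaccessible H t) -> (size r <= d)%N.
Proof.
move=> [v [_ [v_span _]]] PHA qhH uniq_r r_inacc; rewrite leqNgt; apply/negP => lt_dr.
pose f (i : 'I_(size r)) := nth 0%N r i.
have /fin_all_exists [a a_span] : forall i, exists a : 'I_d -> K,
    rowspace A (fun k => unitv K (f i) k - \sum_(j < d) a j * v j k).
  by move=> i; apply: v_span; exists (f i).+1; apply: unitv_vanish.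
have [u u_rel [i0 u_nz]] := nontrivial_relation a lt_dr.
suff u0 : forall i, u i = 0 by rewrite u0 eqxx in u_nz.
apply: (unitv_rowspan_free (a := u) qhH (nth_ord_inj (x0 := 0%N) uniq_r)).
  by move=> i; apply: r_inacc; rewrite mem_nth.
apply: rowspan_matmul PHA _.
have := rowspan_sum (index_enum _) xpredT u (fun i => (rowspaceE _ _).1 (a_span i)).
move/eq_rowspan; apply=> k /=.
rewrite [RHS](eq_bigr (fun i => u i * unitv K (f i) k - \sum_(j < d) u i * a i j * v j k)).
  rewrite sumrB [X in _ - X]exchange_big /= [X in _ - X]big1 ?subr0 // => j _.
  by rewrite -mulr_suml u_rel mul0r.
by move=> i _; rewrite mulrBr mulr_sumr; congr (_ - _); apply: eq_bigr => j _; rewrite mulrA.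
Qed.

Lemma inaccessible_enum (K : fieldType) (A P H : nat -> nat -> K) d :
  codim A d -> matmul_eq P H A -> quasi_hermite H ->
  exists S, uniq S /\ forall t, t \in S <-> inaccessible H t.
Proof.
move=> codim_d PHA qhH; have [B inacc_B] := bounded_of_uniq_size_le
  (fun r => uniq_inaccessible_size_le codim_d PHA qhH (r := r)).
exact: enum_of_bounded inacc_B.
Qed.

Section InaccessibleBasis.
Variables (K : fieldType) (H : nat -> nat -> K) (S : seq nat).
Hypotheses (qhH : quasi_hermite H) (uniq_S : uniq S)
  (S_inacc : forall t, t \in S <-> inaccessible H t).

(* Beyond its length l row j of H vanishes, and below l it vanishes at every accessible
   column, since that column is the pivot of another row. *)
Lemma quasi_hermite_row_sum j l N (y : nat -> K) : is_length (H j) l -> (l < N)%N ->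
  \sum_(k < N) H j k * y k = y l + \sum_(s <- S) H j s * y s.
Proof.
move=> Hjl lt_lN; pose N' := maxn N (\max_(s <- S) s).+1.
have S_N' s : s \in S -> (s < N')%N.
  by move=> sS; rewrite leq_max ltnS (@leq_bigmax_seq _ _ xpredT id s sS) ?orbT.
have lt_lN' : (l < N')%N by rewrite leq_max lt_lN.
have Hjy_l : vanish_from (fun k => H j k * y k) l.+1 by move=> k /Hjl.2->; rewrite mul0r.
rewrite (eq_sum_vanish (vanish_fromW Hjy_l lt_lN) (vanish_fromW Hjy_l lt_lN')).
rewrite (bigID (fun k : 'I_N' => (k : nat) \in S)) /=.
rewrite -(sum_uniq_ord (fun k => H j k * y k)) // addrC.
congr (_ + _); rewrite (bigD1 (Ordinal lt_lN')) /=; last first.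
  by apply/negP => /S_inacc; case; exists j.
rewrite quasi_hermite_pivot // mul1r big1 ?addr0 // => k /andP[kS kl].
have [j' Hj'k] : exists j', is_length (H j') k by apply: NNPP => /S_inacc; apply/negP.
by rewrite -val_eqE in kl; rewrite (quasi_hermite_off_pivot qhH Hj'k Hjl) ?mul0r.
Qed.

Lemma rns_xi s : s \in S -> rns H (xi H s).
Proof.
move=> sS j; case: (classic (exists l, is_length (H j) l)) => [[l Hjl]|no_len].
  exists l.+1; split; first by move=> k /Hjl.2.
  rewrite (quasi_hermite_row_sum _ Hjl (ltnSn l)) (xi_accessible qhH _ Hjl).
  rewrite (eq_big_seq (fun t => H j t * unitv K t s)); last first.
    by move=> t /S_inacc t_inacc; rewrite xi_inaccessible // unitvC.
  by rewrite sum_seq_unitv // sS addNr.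
exists 0%N; split; last by rewrite big_ord0.
by move=> k _; rewrite (quasi_hermite_zero_row qhH) // => l Hjl; apply: no_len; exists l.
Qed.

Lemma xi_free (c : nat -> K) :
  (forall t, \sum_(s <- S) c s * xi H s t = 0) -> forall s, s \in S -> c s = 0.
Proof.
move=> c_xi s sS; rewrite -(c_xi s) (eq_big_seq (fun s' => c s' * unitv K s' s)).
  by rewrite sum_seq_unitv // sS.
by move=> s' _; rewrite xi_inaccessible //; apply/S_inacc.
Qed.

Lemma rns_span x : rns H x -> forall t, x t = \sum_(s <- S) x s * xi H s t.
Proof.
move=> Hx t; case: (classic (inaccessible H t)) => [t_inacc|/NNPP [j Hjt]].
  rewrite (eq_bigr (fun s => x s * unitv K s t)) => [|s _]; last by rewrite xi_inaccessible.
  by rewrite sum_seq_unitv // ifT //; apply/S_inacc.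
have [N [HjN Hjx]] := Hx j.
have : \sum_(k < maxn N t.+1) H j k * x k = 0.
  rewrite -[RHS]Hjx; apply: (eq_sum_vanish (F := fun k => H j k * x k));
    [apply: vanish_fromW (leq_maxl _ _)|]; by move=> k /HjN->; rewrite mul0r.
rewrite (quasi_hermite_row_sum _ Hjt) ?leq_max ?ltnSn ?orbT // => /eqP.
rewrite addr_eq0 => /eqP->; rewrite -sumrN; apply: eq_bigr => s _.
by rewrite (xi_accessible qhH _ Hjt) mulrN mulrC.
Qed.

Lemma codim_inaccessible A P Q :
  matmul_eq Q A H -> matmul_eq P H A -> codim A (size S).
Proof.
move=> QAH PHA; exists (fun i => unitv K (nth 0%N S i)); split; last split.
- by move=> i; exists (nth 0%N S i).+1; apply: unitv_vanish.
- move=> x [N xN].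
  have S_onto t : inaccessible H t -> exists i : 'I_(size S), nth 0%N S i = t.
    move=> /S_inacc tS; have lt_tS : (index t S < size S)%N by rewrite index_mem.
    by exists (Ordinal lt_tS); rewrite nth_index.
  have [a a_x] := unitv_rowspan_cover qhH S_onto xN.
  by exists a; apply/rowspaceE/(rowspan_matmul QAH).
- move=> a /rowspaceE/(rowspan_matmul PHA).
  apply: (unitv_rowspan_free qhH (nth_ord_inj (x0 := 0%N) uniq_S)) => i.
  by apply/S_inacc; rewrite mem_nth.
Qed.

End InaccessibleBasis.

Theorem theorem5 (K : fieldType) (A Q H : nat -> nat -> K) :
  row_finite A -> finite_deficiency A ->
  nonsingular Q -> matmul_eq Q A H -> quasi_hermite H ->
  exists sS : seq nat,
    uniq sS /\ (forall t, t \in sS <-> inaccessible H t) /\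
    (forall s, s \in sS -> rns A (xi H s)) /\
    (forall c : nat -> K, (forall t, \sum_(s <- sS) c s * xi H s t = 0) ->
       forall s, s \in sS -> c s = 0) /\
    (forall x, rns A x -> forall t, x t = \sum_(s <- sS) x s * xi H s t) /\
    codim A (size sS).
Proof.
move=> A_fin [d codim_d] [_ [P [_ [PQ1 _]]]] QAH qhH.
have PHA := matmul_eq_cancel PQ1 QAH.
have [S [uniq_S S_inacc]] := inaccessible_enum codim_d PHA qhH.
exists S; do !split=> //.
- by move=> s sS; apply: rns_matmul PHA A_fin (rns_xi qhH uniq_S S_inacc sS).
- exact: xi_free.
- by move=> x /(rns_matmul QAH qhH.1); apply: rns_span.
- exact: codim_inaccessible QAH PHA.
Qed.
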